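(* Let $R$ be a tolerance relation on $\{1,\ldots,n\}$, $A(R)$, $T$ as in the context, and let $v\in\mathbb{C}^n$ be a unit vector. Then $T(P_v)$ is the weak density matrix of a pure state of $A(R)$ (i.e. the state $a\mapsto\mathrm{Tr}(T(P_v)a)$ of $A(R)$ is pure) if and only if $v$ is $R$-tolerant. More precisely, the restriction map $F:\mathcal{S}(M_n(\mathbb{C}))\to\mathcal{S}(A(R))$ gives a bijection between the set of $R$-tolerant pure states of $M_n(\mathbb{C})$ and the set of pure states of $A(R)$.
   Context: A tolerance relation on a set is a reflexive and symmetric relation; its graph has an edge between $i\ne j$ whenever $(i,j)\in R$. $T(b)=\sum_{(i,j)\in R}E_{ii}bE_{jj}$ for $b\in M_n(\mathbb{C})$, and $A(R)=T(M_n(\mathbb{C}))$, an operator system whose states are linear functionals $\varphi$ with $\varphi(a)\ge0$ for positive semidefinite $a\in A(R)$ and $\varphi(1)=1$; pure states are extremal states. For a unit vector $v$, $P_v=(v_i\overline{v_j})_{i,j}$ is the orthogonal projection onto $\mathbb{C}v$. For non-zero $v$, $R_v:=\{(i,j)\in R: v_iv_j\ne0\}$, a tolerance relation on $\{i: v_i\neq 0\}$; $v$ is $R$-tolerant if the graph of $R_v$ is connected. A pure state of $M_n(\mathbb{C})$ is $R$-tolerant if its density matrix is $P_v$ for an $R$-tolerant unit vector $v$. $F$ sends a state of $M_n(\mathbb{C})$ to its restriction to $A(R)$. *)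

From mathcomp Require Import all_boot all_algebra.
From mathcomp Require Import complex reals.
Set Implicit Arguments. Unset Strict Implicit. Unset Printing Implicit Defensive.
Import GRing.Theory Num.Theory.
Local Open Scope ring_scope.

Section Defs.
Variables (K : realType) (n : nat).
Local Notation C := (K[i]).

Definition tolerance (R : rel 'I_n) : Prop := reflexive R /\ symmetric R.

(* the full relation: A(full) = M_n(C) *)
Definition full_rel : rel 'I_n := fun _ _ => true.

(* T(b) = sum_{(i,j) in R} E_ii b E_jj, written entrywise *)
Definition Tmap (R : rel 'I_n) (b : 'M[C]_n) : 'M[C]_n :=
  \matrix_(i, j) (if R i j then b i j else 0).

Definition in_AR (R : rel 'I_n) (a : 'M[C]_n) : Prop := exists b, a = Tmap R b.

Definition psd (a : 'M[C]_n) : Prop :=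
  forall x : 'cV[C]_n, 0 <= ((map_mx Num.conj x)^T *m a *m x) 0 0.

(* a state of A(R): phi is a function on M_n(C), only its values on A(R) matter *)
Definition stateA (R : rel 'I_n) (phi : 'M[C]_n -> C) : Prop :=
  [/\ (forall a b, in_AR R a -> in_AR R b -> phi (a + b) = phi a + phi b),
      (forall (c : C) a, in_AR R a -> phi (c *: a) = c * phi a),
      (forall a, in_AR R a -> psd a -> 0 <= phi a)
    & phi 1%:M = 1].

Definition pure_stateA (R : rel 'I_n) (phi : 'M[C]_n -> C) : Prop :=
  stateA R phi /\
  forall (t : C) (phi1 phi2 : 'M[C]_n -> C),
    0 < t < 1 -> stateA R phi1 -> stateA R phi2 ->
    (forall a, in_AR R a -> phi a = t * phi1 a + (1 - t) * phi2 a) ->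
    forall a, in_AR R a -> phi1 a = phi a /\ phi2 a = phi a.

Definition unit_vec (v : 'I_n -> C) : Prop := \sum_i v i * (v i)^* = 1.

Definition Pv (v : 'I_n -> C) : 'M[C]_n := \matrix_(i, j) (v i * (v j)^*).

Definition Rv (R : rel 'I_n) (v : 'I_n -> C) : rel 'I_n :=
  fun i j => [&& R i j, v i != 0 & v j != 0].

Definition R_tolerant (R : rel 'I_n) (v : 'I_n -> C) : Prop :=
  (exists i, v i != 0) /\
  forall i j, v i != 0 -> v j != 0 -> connect (Rv R v) i j.

Definition R_tolerant_pure_state (R : rel 'I_n) (om : 'M[C]_n -> C) : Prop :=
  pure_stateA full_rel om /\
  exists v, unit_vec v /\ R_tolerant R v /\ forall a, om a = \tr (Pv v *m a).

End Defs.

(* Krein's extension theorem, proved by adjoining hermitian matrices one at a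
   time and fixing the value on each new one by a supremum, represents every
   state of the operator system A(R) by a density matrix rho.  If rho vanishes
   on every positive a in A(R) with <a v, v> = 0, then its columns vanish off
   the support of v and, along each edge of R_v, are proportional like those
   of P_v; when R_v is connected this forces rho = P_v, so the vector state of
   an R-tolerant v is the only state on that face, hence pure.  When R_v is
   disconnected, A(R) has no entries between the components, so splitting v
   along a component writes its vector state as a proper convex combination
   of two different vector states.  Finally, decomposing a density matrix into
   rank-one positive matrices shows that every pure state of A(R) is a vector
   state. *)

From mathcomp Require Import all_boot all_order all_algebra.
From mathcomp Require Import complex reals classical_sets boolp.
From mathcomp Require Import ring.
Set Implicit Arguments. Unset Strict Implicit. Unset Printing Implicit Defensive.
Import Order.TTheory GRing.Theory Num.Theory.
Local Open Scope ring_scope.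
Local Open Scope sesquilinear_scope.

Section ConjTranspose.
Variable C : numClosedFieldType.

Lemma trmxC_mul m p q (A : 'M[C]_(m, p)) (B : 'M[C]_(p, q)) :
  (A *m B)^t* = B^t* *m A^t*.
Proof. by rewrite trmx_mul map_mxM. Qed.

Lemma trmxC_add m p (A B : 'M[C]_(m, p)) : (A + B)^t* = A^t* + B^t*.
Proof. by rewrite linearD map_mxD. Qed.

Lemma trmxC_scale m p (c : C) (A : 'M[C]_(m, p)) : (c *: A)^t* = c^* *: A^t*.
Proof. by rewrite linearZ map_mxZ. Qed.

Lemma trmxC_delta m p (i : 'I_m) (j : 'I_p) : (delta_mx i j : 'M[C]_(m, p))^t* = delta_mx j i.
Proof. by rewrite trmx_delta map_delta_mx. Qed.

Lemma trmxC1 m : (1%:M : 'M[C]_m)^t* = 1%:M.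
Proof. by rewrite trmx1 map_mx1. Qed.

End ConjTranspose.

Section HermitianForm.
Variables (K : realType) (n : nat).
Local Notation C := K[i].
Local Notation M := 'M[C]_n.
Local Notation V := 'cV[C]_n.

Definition hform (a : M) (x y : V) : C := (x^t* *m a *m y) 0 0.
Definition qform (a : M) (x : V) : C := hform a x x.
Definition ecol (i : 'I_n) : V := delta_mx i 0.

Lemma psdP (a : M) : psd a <-> forall x, 0 <= qform a x.
Proof. by rewrite /psd /qform /hform; split=> a_ge0 x; rewrite ?map_trmx // -map_trmx. Qed.

Lemma hformDl a x y z : hform a (x + y) z = hform a x z + hform a y z.
Proof. by rewrite /hform trmxC_add !mulmxDl mxE. Qed.

Lemma hformDr a x y z : hform a z (x + y) = hform a z x + hform a z y.
Proof. by rewrite /hform !mulmxDr mxE. Qed.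

Lemma hformZl a c x y : hform a (c *: x) y = c^* * hform a x y.
Proof. by rewrite /hform trmxC_scale -!scalemxAl mxE. Qed.

Lemma hformZr a c x y : hform a x (c *: y) = c * hform a x y.
Proof. by rewrite /hform -!scalemxAr mxE. Qed.

Lemma hformBr a x y z : hform a z (x - y) = hform a z x - hform a z y.
Proof. by rewrite hformDr -scaleN1r hformZr mulN1r. Qed.

Lemma hform_mxD a b x y : hform (a + b) x y = hform a x y + hform b x y.
Proof. by rewrite /hform mulmxDr mulmxDl mxE. Qed.

Lemma hform_mxZ c a x y : hform (c *: a) x y = c * hform a x y.
Proof. by rewrite /hform -scalemxAr -scalemxAl mxE. Qed.

Lemma hform_mxB a b x y : hform (a - b) x y = hform a x y - hform b x y.
Proof. by rewrite hform_mxD -scaleN1r hform_mxZ mulN1r. Qed.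

Lemma qform_mxB a b x : qform (a - b) x = qform a x - qform b x.
Proof. exact: hform_mxB. Qed.

Lemma hform_conj a x y : (hform a x y)^* = hform (a^t*) y x.
Proof.
have conj11 (A : 'M[C]_1) : (A 0 0)^* = A^t* 0 0 by rewrite !mxE.
by rewrite /hform conj11 !trmxC_mul trmxCK mulmxA.
Qed.

Lemma ecol_trmxC i : (ecol i)^t* = delta_mx 0 i.
Proof. exact: trmxC_delta. Qed.

Lemma hform_ecoll a l x : hform a (ecol l) x = (a *m x) l 0.
Proof. by rewrite /hform ecol_trmxC -mulmxA -rowE mxE. Qed.

Lemma hform_ecol a i j : hform a (ecol i) (ecol j) = a i j.
Proof. by rewrite hform_ecoll /ecol -colE mxE. Qed.

Lemma qform_add_scale a x y (l : C) :
  qform a (x + l *: y) = qform a x + l * hform a x y + l^* * hform a y x + l^* * l * qform a y.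
Proof. by rewrite /qform !hformDl !hformDr !hformZl !hformZr mulrA !addrA. Qed.

Lemma qform_sum a x : qform a x = \sum_j \sum_i (x i 0)^* * a i j * x j 0.
Proof.
rewrite /qform /hform mxE; apply: eq_bigr => j _; rewrite mxE mulr_suml.
by apply: eq_bigr => i _; rewrite !mxE.
Qed.

Lemma qform1E x : qform 1%:M x = \sum_k `|x k 0| ^+ 2.
Proof.
rewrite /qform /hform mulmx1 mxE; apply: eq_bigr => k _.
by rewrite !mxE normCK mulrC.
Qed.

Lemma qform1_ge0 x : 0 <= qform 1%:M x.
Proof. by rewrite qform1E; apply: sumr_ge0 => k _; apply: exprn_ge0. Qed.

Lemma qform0 a : qform a 0 = 0.
Proof. by rewrite /qform /hform mulmx0 mxE. Qed.

Lemma qform_scale_sqrt a x (t : C) : 0 < t -> qform a ((sqrtC t)^-1 *: x) = qform a x / t.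
Proof.
move=> t_gt0; have s_gt0 : 0 < sqrtC t by rewrite sqrtC_gt0.
rewrite /qform hformZl hformZr fmorphV /= geC0_conj ?ltW // mulrA -invfM -expr2 sqrtCK.
by rewrite mulrC.
Qed.

Lemma qform1_eq0 x : qform 1%:M x = 0 -> x = 0.
Proof.
rewrite qform1E => /psumr_eq0P x0; apply/matrixP => k l; rewrite ord1 mxE.
have /eqP := x0 (fun i _ => exprn_ge0 2 (normr_ge0 (x i 0))) k isT.
by rewrite expf_eq0 normr_eq0 => /eqP.
Qed.

Lemma norm_le_qform1 (x : V) k : `|x k 0| ^+ 2 <= qform 1%:M x.
Proof. by rewrite qform1E (bigD1 k) //= lerDl; apply: sumr_ge0 => i _; apply: exprn_ge0. Qed.

Lemma hform1_conj x y : (hform 1%:M x y)^* = hform 1%:M y x.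
Proof. by rewrite hform_conj trmxC1. Qed.

Lemma hform1_ecoll i x : hform 1%:M (ecol i) x = x i 0.
Proof. by rewrite hform_ecoll mul1mx. Qed.

Lemma hform1_ecolr x i : hform 1%:M x (ecol i) = (x i 0)^*.
Proof. by rewrite -hform1_conj hform1_ecoll. Qed.

Lemma qform_rank1 y z x : qform (y *m z^t*) x = hform 1%:M x y * hform 1%:M z x.
Proof.
rewrite /qform /hform !mulmx1 !mulmxA -(mulmxA (x^t* *m y)).
by rewrite [in LHS]mxE big_ord1.
Qed.

Lemma qform_outer x y : qform (x *m x^t*) y = hform 1%:M y x * (hform 1%:M y x)^*.
Proof. by rewrite qform_rank1 hform1_conj. Qed.

Lemma qform_delta x i j : qform (delta_mx i j) x = (x i 0)^* * x j 0.
Proof.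
have -> : delta_mx i j = ecol i *m (ecol j)^t* by rewrite ecol_trmxC mul_delta_mx.
by rewrite qform_rank1 hform1_ecolr hform1_ecoll.
Qed.

Lemma tr_mul_outer a x : \tr (a *m (x *m x^t*)) = qform a x.
Proof. by rewrite mulmxA mxtrace_mulC /qform /hform mulmxA /mxtrace big_ord1. Qed.

Lemma qform_eq0_mx a : (forall x, qform a x = 0) -> a = 0.
Proof.
move=> a0; apply/matrixP => i j; rewrite mxE.
have diag k : a k k = 0 by rewrite -hform_ecol; apply: a0.
have polar l : l * a j i + l^* * a i j = 0.
  have := a0 (ecol j + l *: ecol i).
  by rewrite qform_add_scale /qform !hform_ecol !diag mulr0 add0r addr0.
have /addr0_eq aij : a j i + a i j = 0 by have := polar 1; rewrite conjC1 !mul1r.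
have /eqP := polar 'i; rewrite conjCi -aij mulNr mulrN opprK -mulrDr mulf_eq0.
by rewrite (negbTE (neq0Ci C)) -mulr2n mulrn_eq0 /= => /eqP ->; rewrite oppr0.
Qed.

Lemma psd_hermitian (a : M) : psd a -> a^t* = a.
Proof.
move/psdP=> a_ge0; apply/eqP; rewrite eq_sym -subr_eq0; apply/eqP; apply: qform_eq0_mx => x.
by rewrite /qform hform_mxB -hform_conj (geC0_conj (a_ge0 x)) subrr.
Qed.

Lemma psd_diag_ge0 (a : M) i : psd a -> 0 <= a i i.
Proof. by move/psdP/(_ (ecol i)); rewrite /qform hform_ecol. Qed.

Lemma psdD (a b : M) : psd a -> psd b -> psd (a + b).
Proof.
move=> /psdP a_ge0 /psdP b_ge0; apply/psdP => x; rewrite /qform hform_mxD.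
exact: addr_ge0 (a_ge0 x) (b_ge0 x).
Qed.

Lemma psdZ (c : C) (a : M) : 0 <= c -> psd a -> psd (c *: a).
Proof.
move=> c_ge0 /psdP a_ge0; apply/psdP => x; rewrite /qform hform_mxZ.
exact: mulr_ge0 c_ge0 (a_ge0 x).
Qed.

Lemma psd_outer (x : V) : psd (x *m x^t*).
Proof. by apply/psdP => y; rewrite qform_outer mul_conjC_ge0. Qed.

(* Positivity of [qform a (x - t *: a x)] for [t = N / (q + 1)], with
   [N = |a x|^2] and [q = qform a (a x)], forces [N = 0]. *)
Lemma psd_mulmx_eq0 (a : M) x : psd a -> qform a x = 0 -> a *m x = 0.
Proof.
move=> a_psd ax0; have /psdP a_ge0 := a_psd; set w := a *m x.
set N := qform 1%:M w; set q := qform a w.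
have hwx : hform a w x = N by rewrite /N /qform /hform mulmx1 -mulmxA.
have hxw : hform a x w = N.
  by rewrite -[LHS]conjCK hform_conj psd_hermitian // hwx geC0_conj ?qform1_ge0.
have q1_gt0 : 0 < q + 1 := ltr_wpDl (a_ge0 w) ltr01.
set t := N / (q + 1).
have tc : t^* = t by rewrite geC0_conj // divr_ge0 ?qform1_ge0 ?ltW.
have := a_ge0 (x + (- t) *: w).
rewrite qform_add_scale ax0 hwx hxw rmorphN /= tc.
have -> : 0 + - t * N + - t * N + - t * - t * q = - (N ^+ 2 * (q + 2) / (q + 1) ^+ 2).
  by rewrite /t; field; rewrite gt_eqF.
have q2_gt0 : 0 < q + 2 := ltr_wpDl (a_ge0 w) (ltr0Sn _ 1).
rewrite oppr_ge0 pmulr_lle0 ?invr_gt0 ?exprn_gt0 // pmulr_lle0 // => N2_le0.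
apply: qform1_eq0; apply/eqP.
by rewrite -sqrf_eq0 eq_le N2_le0 exprn_ge0 ?qform1_ge0.
Qed.

Lemma psd_col_eq0 (a : M) j : psd a -> a j j = 0 -> forall l, a l j = 0.
Proof.
move=> a_psd ajj l; rewrite -hform_ecol hform_ecoll psd_mulmx_eq0 ?mxE //.
by rewrite /qform hform_ecol.
Qed.

Lemma psd_eq0 (a : M) : psd a -> (forall j, a j j = 0) -> a = 0.
Proof. by move=> a_psd a0; apply/matrixP => l j; rewrite mxE (psd_col_eq0 a_psd). Qed.

Lemma normM_le_qform1 (x : V) i j : `|x i 0| * `|x j 0| <= qform 1%:M x.
Proof.
have [le_ij | le_ji] := real_leP (normr_real (x i 0)) (normr_real (x j 0)).
  by apply: le_trans (norm_le_qform1 x j); rewrite expr2 ler_wpM2r.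
by apply: le_trans (norm_le_qform1 x i); rewrite expr2 ler_wpM2l // ltW.
Qed.

Lemma hermitian_psd_shift (h : M) : h^t* = h -> exists2 r : C, 0 <= r & psd (h + r%:M).
Proof.
move=> h_herm; set r := \sum_j \sum_i `|h i j|.
exists r; first by apply: sumr_ge0 => j _; apply: sumr_ge0.
apply/psdP => x; rewrite /qform hform_mxD -scalemx1 hform_mxZ -/(qform h x) -/(qform _ x).
have hx_real : qform h x \is Num.real by apply/CrealP; rewrite hform_conj h_herm.
have : `|qform h x| <= r * qform 1%:M x.
  rewrite qform_sum; apply: le_trans (ler_norm_sum _ _ _) _.
  rewrite mulr_suml; apply: ler_sum => j _; apply: le_trans (ler_norm_sum _ _ _) _.
  rewrite mulr_suml; apply: ler_sum => i _.
  by rewrite !normrM norm_conjC mulrAC mulrC ler_wpM2l ?normM_le_qform1.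
by move/(real_lerNnormlW hx_real); rewrite -subr_ge0 opprK addrC.
Qed.

Lemma psd_rank_one_step (a : M) m : psd a -> a m m != 0 ->
  exists y : V, [/\ psd (a - y *m y^t*), (a - y *m y^t*) m m = 0 &
                    forall j, a j j = 0 -> (a - y *m y^t*) j j = 0].
Proof.
move=> a_psd amm_neq0; have /psdP a_ge0 := a_psd.
have a_herm l j : a l j = (a j l)^* by rewrite -{1}(psd_hermitian a_psd) !mxE.
set p := a m m; have p_gt0 : 0 < p by rewrite lt0r amm_neq0 psd_diag_ge0.
have pc : p^* = p by rewrite geC0_conj ?ltW.
set s := sqrtC p; have s_neq0 : s != 0 by rewrite sqrtC_eq0 gt_eqF.
have sc : s^* = s by rewrite geC0_conj ?sqrtC_ge0 ?ltW.
pose y : V := s^-1 *: (a *m ecol m).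
have yyE l j : (y *m y^t*) l j = a l m * (a j m)^* / p.
  have ytE j' : (y^t*) 0 j' = (y j' 0)^* by rewrite 2!mxE.
  have yE l' : y l' 0 = s^-1 * a l' m by rewrite mxE -hform_ecoll hform_ecol.
  rewrite mxE big_ord1 ytE !yE rmorphM fmorphV /= sc -(sqrtCK p) -/s.
  by field.
exists y; split.
- apply/psdP => x; set beta := hform a x (ecol m).
  have -> : qform (a - y *m y^t*) x = qform a x - beta * beta^* / p.
    rewrite qform_mxB qform_outer; congr (_ - _).
    have -> : hform 1%:M x y = s^-1 * beta.
      by rewrite /hform mulmx1 -scalemxAr mxE mulmxA.
    by rewrite rmorphM fmorphV /= sc -(sqrtCK p) -/s; field.
  have hb : hform a (ecol m) x = beta^* by rewrite hform_conj psd_hermitian.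
  have qm : qform a (ecol m) = p by rewrite /qform hform_ecol.
  have -> : qform a x - beta * beta^* / p = qform a (x + (- (beta^* / p)) *: ecol m).
    rewrite qform_add_scale -/beta hb qm rmorphN rmorphM fmorphV /= conjCK pc.
    by field; rewrite gt_eqF.
  exact: a_ge0.
- by rewrite 2!mxE yyE -/p pc; field; rewrite gt_eqF.
- move=> j ajj; rewrite 2!mxE yyE ajj.
  by rewrite a_herm psd_col_eq0 // conjC0 rmorph0 mulr0 mul0r subrr.
Qed.

Lemma psd_sum_outer (a : M) : psd a -> exists ys : seq V, a = \sum_(y <- ys) y *m y^t*.
Proof.
have [k] := ubnP #|[pred j | a j j != 0]|.
elim: k a => // k IHk a supp_lt a_psd.
have [m /= amm | diag0] := pickP [pred j | a j j != 0]; last first.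
  exists [::]; rewrite big_nil; apply: psd_eq0 => // j.
  by apply/eqP; move/negbFE: (diag0 j).
have [y [a'_psd a'mm a'0]] := psd_rank_one_step a_psd amm.
have [|ys a'E] := IHk _ _ a'_psd.
  rewrite -ltnS; apply: leq_trans supp_lt; apply: proper_card; apply/properP; split.
    by apply/fintype.subsetP => j; rewrite !inE; apply: contra => /eqP /a'0 ->.
  by exists m; rewrite !inE ?amm // a'mm eqxx.
by exists (y :: ys); rewrite big_cons -a'E addrC subrK.
Qed.

End HermitianForm.
Arguments ecol {K n} i.

Lemma lec_real_complex (K : realType) (t : K) (x : K[i]) : x \is Num.real ->
  ((t%:C)%C <= x) = (t <= complex.Re x).
Proof. by move=> xR; rewrite -{1}(RRe_real xR) lecR. Qed.

Lemma ger_real_complex (K : realType) (t : K) (x : K[i]) : x \is Num.real ->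
  (x <= (t%:C)%C) = (complex.Re x <= t).
Proof. by move=> xR; rewrite -{1}(RRe_real xR) lecR. Qed.

Section Extension.
Variables (K : realType) (n : nat).
Local Notation C := K[i].
Local Notation M := 'M[C]_n.

Definition opsys (P : M -> Prop) :=
  [/\ P 1%:M, (forall a b, P a -> P b -> P (a + b)),
      (forall (c : C) a, P a -> P (c *: a)) & (forall a, P a -> P (a^t*))].

(* [stateA R] is [state_on (in_AR R)]. *)
Definition state_on (P : M -> Prop) (phi : M -> C) : Prop :=
  [/\ (forall a b, P a -> P b -> phi (a + b) = phi a + phi b),
      (forall (c : C) a, P a -> phi (c *: a) = c * phi a),
      (forall a, P a -> psd a -> 0 <= phi a)
    & phi 1%:M = 1].

Definition adjoin (P : M -> Prop) (h : M) : M -> Prop :=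
  fun m => exists a c, P a /\ m = a + c *: h.

Variables (P : M -> Prop) (phi : M -> C).
Hypotheses (P_os : opsys P) (phi_state : state_on P phi).

Lemma opsys0 : P 0.
Proof. by case: P_os => P1 _ PZ _; rewrite -(scale0r 1%:M); apply: PZ. Qed.

Lemma opsysB a b : P a -> P b -> P (a - b).
Proof. by case: P_os => _ PD PZ _ Pa Pb; rewrite -scaleN1r; apply/PD/PZ. Qed.

Lemma state_on0 : phi 0 = 0.
Proof.
case: P_os phi_state => P1 _ PZ _ [_ phiZ _ _].
by rewrite -(scale0r 1%:M) phiZ ?mul0r.
Qed.

Lemma state_on_real b : P b -> b^t* = b -> phi b \is Num.real.
Proof.
move=> Pb b_herm; have [r r_ge0 br_psd] := hermitian_psd_shift b_herm.
case: P_os phi_state => P1 PD PZ _ [phiD phiZ phi_ge0 phi1].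
have Pr : P r%:M by rewrite -scalemx1; apply: PZ.
have := phi_ge0 _ (PD _ _ Pb Pr) br_psd.
rewrite phiD // -scalemx1 phiZ // phi1 mulr1 => br_ge0.
by rewrite -[phi b](addrK r) rpredB ?ger0_real.
Qed.

Lemma adjoin_uniq h a a' c c' : ~ P h -> P a -> P a' ->
  a + c *: h = a' + c' *: h -> a = a' /\ c = c'.
Proof.
move=> Ph_false Pa Pa' E.
have [cc'|cc'_neq0] := eqVneq c c'; first by split=> //; move: E; rewrite cc' => /addIr.
have E' : a' - a = (c - c') *: h.
  by rewrite scalerBl -[a'](addrK (c' *: h)) -E addrAC [a + _]addrC addrK.
have cc'0 : c - c' != 0 by rewrite subr_eq0.
case: Ph_false; rewrite -[h]scale1r -(mulVf cc'0) -scalerA -E'.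
by case: P_os => _ _ PZ _; apply/PZ/opsysB.
Qed.

Section AdjoinBounds.
Variables (h : M) (gamma : C).
Hypotheses (h_herm : h^t* = h) (Ph_false : ~ P h).
Hypothesis lb : forall b, P b -> psd (b + h) -> - phi b <= gamma.
Hypothesis ub : forall b, P b -> psd (b - h) -> gamma <= phi b.

Lemma adjoin_value_ge0 a c : P a -> psd (a + c *: h) -> 0 <= phi a + c * gamma.
Proof.
move=> Pa ach_psd; case: (P_os) => _ _ PZ PC; case: phi_state => _ phiZ phi_ge0 _.
have := psd_hermitian ach_psd; rewrite trmxC_add trmxC_scale h_herm.
case/(adjoin_uniq Ph_false (PC _ Pa) Pa) => _ /CrealP c_real.
have phi_scale d : d != 0 -> phi a = d * phi (d^-1 *: a).
  by move=> d_neq0; rewrite phiZ // mulrA divff ?mul1r.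
have [c_lt0 | c_gt0 | c0] := real_ltgtP c_real (real0 _).
- have d_gt0 : 0 < - c by rewrite oppr_gt0.
  have b_psd : psd ((- c)^-1 *: a - h).
    rewrite -[h](scalerK (lt0r_neq0 d_gt0)) -scalerBr scaleNr opprK.
    by apply: psdZ; rewrite ?invr_ge0 ?ltW.
  have := ub (PZ _ _ Pa) b_psd; rewrite -subr_ge0 => bnd.
  have -> : phi a + c * gamma = - c * (phi ((- c)^-1 *: a) - gamma).
    by rewrite mulrBr -phi_scale ?gt_eqF // mulNr opprK.
  exact: mulr_ge0 (ltW d_gt0) bnd.
- have b_psd : psd (c^-1 *: a + h).
    rewrite -[h](scalerK (lt0r_neq0 c_gt0)) -scalerDr.
    by apply: psdZ; rewrite ?invr_ge0 ?ltW.
  have := lb (PZ _ _ Pa) b_psd; rewrite -subr_ge0 opprK => bnd.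
  have -> : phi a + c * gamma = c * (gamma + phi (c^-1 *: a)).
    by rewrite mulrDr -phi_scale ?gt_eqF // addrC.
  exact: mulr_ge0 (ltW c_gt0) bnd.
- by move: ach_psd; rewrite c0 scale0r mul0r !addr0; apply: phi_ge0.
Qed.

Lemma state_adjoin_of_bounds :
  exists2 phi', state_on (adjoin P h) phi' & forall a, P a -> phi' a = phi a.
Proof.
case: (P_os) => P1 PD PZ _; case: phi_state => phiD phiZ _ phi1.
pose dec m := xget (0, 0) [set p : M * C | P p.1 /\ m = p.1 + p.2 *: h].
pose phi' m := phi (dec m).1 + (dec m).2 * gamma.
have phi'E a c : P a -> phi' (a + c *: h) = phi a + c * gamma.
  move=> Pa; rewrite /phi' /dec; case: xgetP => [[a' c'] _ /= [Pa' E] | /(_ (a, c)) []//].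
  by have [-> ->] := adjoin_uniq Ph_false Pa' Pa (esym E).
have phi'P a : P a -> phi' a = phi a.
  by move=> Pa; have := phi'E a 0 Pa; rewrite scale0r mul0r !addr0.
exists phi'; last exact: phi'P.
split; last by rewrite phi'P.
- move=> _ _ [a [c [Pa ->]]] [b [d [Pb ->]]].
  have Pab := PD _ _ Pa Pb.
  by rewrite addrACA -scalerDl !phi'E // phiD // mulrDl addrACA.
- move=> e _ [a [c [Pa ->]]].
  have Pea := PZ e _ Pa.
  by rewrite scalerDr scalerA !phi'E // phiZ // mulrDr mulrA.
- by move=> _ [a [c [Pa ->]]] ach_psd; rewrite phi'E //; apply: adjoin_value_ge0.
Qed.

End AdjoinBounds.

(* Krein's extension step: [gamma] is the supremum of [- phi b] over the [b]
   in [P] with [b + h] positive. *)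
Lemma state_adjoin h : h^t* = h ->
  exists2 phi', state_on (adjoin P h) phi' & forall a, P a -> phi' a = phi a.
Proof.
move=> h_herm; case: (P_os) => P1 PD PZ PC; case: (phi_state) => phiD phiZ phi_ge0 phi1.
have [Ph | Ph_false] := pselect (P h).
  have adjoinP m : adjoin P h m -> P m by case=> a [c [Pa ->]]; apply/PD/PZ.
  by exists phi => //; split=> // [a b /adjoinP Pa /adjoinP Pb | c a /adjoinP Pa | a /adjoinP Pa];
    [exact: phiD | exact: phiZ | exact: phi_ge0].
have phi_scalar (s : C) : phi s%:M = s by rewrite -scalemx1 phiZ // phi1 mulr1.
have P_scalar (s : C) : P s%:M by rewrite -scalemx1; apply: PZ.
have phi_real b s : P b -> psd (b + s *: h) -> phi b \is Num.real.
  move=> Pb /psd_hermitian; rewrite trmxC_add trmxC_scale h_herm.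
  by case/(adjoin_uniq Ph_false (PC _ Pb) Pb) => /(state_on_real Pb).
have sep b b' : P b -> psd (b + h) -> P b' -> psd (b' - h) -> - phi b <= phi b'.
  move=> Pb bh_psd Pb' b'h_psd; rewrite -subr_ge0 opprK addrC -phiD //.
  apply: phi_ge0 (PD _ _ Pb Pb') _.
  rewrite -[b + b']addr0 -(subrr h) addrACA; exact: psdD bh_psd b'h_psd.
pose S : set K := fun t => exists2 b, P b /\ psd (b + h) & t = complex.Re (- phi b).
have [r r_ge0 hr_psd] := hermitian_psd_shift h_herm.
have [r' r'_ge0 hr'_psd] : exists2 r' : C, 0 <= r' & psd (- h + r'%:M).
  by apply: hermitian_psd_shift; rewrite linearN /= map_mxN h_herm.
have S_ne0 : (S !=set0)%classic.
  exists (complex.Re (- r)), r%:M; last by rewrite phi_scalar.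
  by split; [exact: P_scalar | rewrite addrC; exact: hr_psd].
have S_ub b' : P b' -> psd (b' - h) -> ubound S (complex.Re (phi b')).
  move=> Pb' b'h_psd _ [b [Pb bh_psd] ->].
  by move: (sep _ _ Pb bh_psd Pb' b'h_psd); rewrite lecE => /andP[].
have S_sup : has_ubound S.
  exists (complex.Re r'); rewrite -[r']phi_scalar.
  by apply: S_ub; [exact: P_scalar | rewrite addrC; exact: hr'_psd].
apply: (state_adjoin_of_bounds (gamma := (sup S)%:C%C) h_herm Ph_false) => b Pb bh_psd.
  rewrite ger_real_complex; last by rewrite rpredN (phi_real _ 1) ?scale1r.
  by apply: ub_le_sup => //; exists b.
rewrite lec_real_complex; last by move: bh_psd; rewrite -scaleN1r; apply: phi_real.
by apply: ge_sup => //; apply: S_ub.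
Qed.

End Extension.

Section FullExtension.
Variables (K : realType) (n : nat).
Local Notation C := K[i].
Local Notation M := 'M[C]_n.

Lemma opsys_adjoin (P : M -> Prop) h : opsys P -> h^t* = h -> opsys (adjoin P h).
Proof.
move=> [P1 PD PZ PC] h_herm; split.
- by exists 1%:M, 0; rewrite scale0r addr0.
- move=> _ _ [a [c [Pa ->]]] [b [d [Pb ->]]].
  by exists (a + b), (c + d); rewrite scalerDl addrACA; split=> //; apply: PD.
- move=> e _ [a [c [Pa ->]]].
  by exists (e *: a), (e * c); rewrite scalerDr scalerA; split=> //; apply: PZ.
- move=> _ [a [c [Pa ->]]].
  by exists (a^t*), c^*; rewrite trmxC_add trmxC_scale h_herm; split=> //; apply: PC.
Qed.

Lemma adjoin_sub (P : M -> Prop) h a : P a -> adjoin P h a.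
Proof. by move=> Pa; exists a, 0; rewrite scale0r addr0. Qed.

Lemma adjoin_gen (P : M -> Prop) h : opsys P -> adjoin P h h.
Proof. by move=> P_os; exists 0, 1; rewrite scale1r add0r; split=> //; apply: opsys0. Qed.

Definition adjoin_seq (P : M -> Prop) (hs : seq M) : M -> Prop :=
  foldr (fun h Q => adjoin Q h) P hs.

Definition herm_re (k l : 'I_n) : M := delta_mx k l + delta_mx l k.
Definition herm_im (k l : 'I_n) : M := 'i *: (delta_mx k l - delta_mx l k).

Definition herm_basis : seq M :=
  [seq herm_re p.1 p.2 | p <- enum {: 'I_n * 'I_n}] ++
  [seq herm_im p.1 p.2 | p <- enum {: 'I_n * 'I_n}].

Lemma herm_basis_hermitian : {in herm_basis, forall h, h^t* = h}.
Proof.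
move=> h; rewrite mem_cat => /orP [] /mapP [[k l] _ ->] /=.
  by rewrite trmxC_add !trmxC_delta addrC.
rewrite trmxC_scale trmxC_add linearN /= map_mxN !trmxC_delta conjCi.
by rewrite scaleNr -scalerN opprB.
Qed.

Lemma delta_mx_herm k l : delta_mx k l = 2^-1 *: (herm_re k l + (- 'i) *: herm_im k l) :> M.
Proof.
rewrite /herm_re /herm_im scaleNr (scalerA 'i 'i) -expr2 sqrCi scaleN1r opprK.
rewrite addrACA subrr addr0 -mulr2n -scalerMnr scalerMnl -[(2^-1 : C) *+ 2]mulr_natr.
by rewrite mulVf ?scale1r // pnatr_eq0.
Qed.

Lemma state_full_density (Q : M -> Prop) phi : opsys Q -> (forall a, Q a) -> state_on Q phi ->
  exists rho : M, [/\ psd rho, \tr rho = 1 & forall a, phi a = \tr (rho *m a)].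
Proof.
move=> Q_os Qall phi_state; have phi0 := state_on0 Q_os phi_state.
case: phi_state => phiD phiZ phi_ge0 phi1.
have phi_morph : {morph phi : x y / x + y} by move=> x y; apply: phiD.
pose rho : M := \matrix_(l, k) phi (delta_mx k l).
have rhoE a : \tr (rho *m a) = phi a.
  rewrite /mxtrace (eq_bigr (fun l => \sum_k rho l k * a k l)) => [|l _]; last by rewrite mxE.
  rewrite {2}[a]matrix_sum_delta (big_morph phi phi_morph phi0) exchange_big.
  apply: eq_bigr => k _; rewrite (big_morph phi phi_morph phi0).
  by apply: eq_bigr => l _; rewrite phiZ // mxE mulrC.
exists rho; split=> [||a]; last by rewrite rhoE.
- apply/psdP => x; rewrite -tr_mul_outer rhoE.
  exact: phi_ge0 (Qall _) (psd_outer x).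
- by rewrite -[rho]mulmx1 rhoE.
Qed.

Variable P : M -> Prop.
Hypothesis P_os : opsys P.

Lemma opsys_adjoin_seq hs : {in hs, forall h, h^t* = h} -> opsys (adjoin_seq P hs).
Proof.
elim: hs => //= h hs IHhs herm; apply: opsys_adjoin; last by apply: herm; rewrite mem_head.
by apply: IHhs => k k_hs; apply: herm; rewrite in_cons k_hs orbT.
Qed.

Lemma adjoin_seq_sub hs a : P a -> adjoin_seq P hs a.
Proof. by elim: hs => //= h hs IHhs Pa; apply/adjoin_sub/IHhs. Qed.

Lemma adjoin_seq_gen hs h : {in hs, forall h, h^t* = h} -> h \in hs -> adjoin_seq P hs h.
Proof.
elim: hs => //= h' hs IHhs herm; rewrite in_cons => /predU1P [->|h_hs].
  by apply/adjoin_gen/opsys_adjoin_seq => k k_hs; apply: herm; rewrite in_cons k_hs orbT.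
by apply/adjoin_sub/IHhs => // k k_hs; apply: herm; rewrite in_cons k_hs orbT.
Qed.

Lemma state_adjoin_seq phi hs : state_on P phi -> {in hs, forall h, h^t* = h} ->
  exists2 phi', state_on (adjoin_seq P hs) phi' & forall a, P a -> phi' a = phi a.
Proof.
move=> phi_state; elim: hs => [|h hs IHhs] herm; first by exists phi.
have herm_hs : {in hs, forall h, h^t* = h}.
  by move=> k k_hs; apply: herm; rewrite in_cons k_hs orbT.
have [phi1 phi1_state phi1E] := IHhs herm_hs.
have [|phi2 phi2_state phi2E] := state_adjoin (opsys_adjoin_seq herm_hs) phi1_state (h := h).
  by apply: herm; rewrite mem_head.
exists phi2 => // a Pa; rewrite phi2E ?phi1E //; exact: adjoin_seq_sub.
Qed.

Lemma adjoin_herm_basis a : adjoin_seq P herm_basis a.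
Proof.
have Q_os := opsys_adjoin_seq herm_basis_hermitian; have [_ QD QZ _] := Q_os.
have Qh h : h \in herm_basis -> adjoin_seq P herm_basis h.
  exact: adjoin_seq_gen herm_basis_hermitian.
rewrite [a]matrix_sum_delta; apply: big_ind => [|x y|k _]; [exact: opsys0 Q_os | exact: QD |].
apply: big_ind => [|x y|l _]; [exact: opsys0 Q_os | exact: QD |].
have re_in : herm_re k l \in herm_basis.
  by rewrite mem_cat (map_f (fun p : 'I_n * 'I_n => herm_re p.1 p.2) (mem_enum _ (k, l))).
have im_in : herm_im k l \in herm_basis.
  by rewrite mem_cat (map_f (fun p : 'I_n * 'I_n => herm_im p.1 p.2) (mem_enum _ (k, l))) orbT.
rewrite delta_mx_herm; exact: QZ (QZ _ _ (QD _ _ (Qh _ re_in) (QZ _ _ (Qh _ im_in)))).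
Qed.

Lemma state_density phi : state_on P phi ->
  exists rho : M, [/\ psd rho, \tr rho = 1 & forall a, P a -> phi a = \tr (rho *m a)].
Proof.
move=> phi_state; have Q_os := opsys_adjoin_seq herm_basis_hermitian.
have [psi psi_state psiE] := state_adjoin_seq phi_state herm_basis_hermitian.
have [rho [rho_psd rho_tr rhoE]] := state_full_density Q_os adjoin_herm_basis psi_state.
exists rho; split; [exact: rho_psd | exact: rho_tr | move=> a Pa].
by rewrite -psiE // rhoE.
Qed.

End FullExtension.

Section ToleranceAlgebra.
Variables (K : realType) (n : nat).
Local Notation C := K[i].
Local Notation M := 'M[C]_n.
Local Notation V := 'cV[C]_n.

Definition colv (v : 'I_n -> C) : V := \col_i v i.

Lemma Pv_outer v : Pv v = colv v *m (colv v)^t*.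
Proof. by apply/matrixP => i j; rewrite !mxE big_ord1 !mxE. Qed.

Lemma tr_Pv v a : \tr (Pv v *m a) = qform a (colv v).
Proof. by rewrite Pv_outer mxtrace_mulC tr_mul_outer. Qed.

Lemma psd_Pv (v : 'I_n -> C) : psd (Pv v).
Proof. rewrite Pv_outer; exact: psd_outer. Qed.

Lemma unit_vecE v : unit_vec v <-> qform 1%:M (colv v) = 1.
Proof.
rewrite qform1E /unit_vec (_ : \sum_k _ = \sum_i v i * (v i)^*) //.
by apply: eq_bigr => i _; rewrite mxE normCK.
Qed.

Lemma mxtrace_Pv (v : 'I_n -> C) : unit_vec v -> \tr (Pv v) = 1.
Proof. by move/unit_vecE; rewrite -[Pv v]mulmx1 tr_Pv. Qed.

Lemma state_on_ext (P : M -> Prop) phi psi : opsys P -> state_on P phi ->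
  (forall a, P a -> phi a = psi a) -> state_on P psi.
Proof.
move=> [P1 PD PZ _] [phiD phiZ phi_ge0 phi1] E; split; rewrite -?E //.
- by move=> a b Pa Pb; rewrite -!E ?phiD //; apply: PD.
- by move=> c a Pa; rewrite -!E ?phiZ //; apply: PZ.
- by move=> a Pa; rewrite -E //; apply: phi_ge0.
Qed.

Lemma qform_sum_state (P : M -> Prop) (ys : seq V) : 0 < \sum_(y <- ys) qform 1%:M y ->
  state_on P (fun a => (\sum_(y <- ys) qform a y) / \sum_(y <- ys) qform 1%:M y).
Proof.
move=> ys_gt0; split.
- move=> a b _ _; rewrite -mulrDl -big_split /=.
  by congr (_ / _); apply: eq_bigr => y _; rewrite /qform hform_mxD.
- move=> c a _; rewrite mulrA mulr_sumr.
  by congr (_ / _); apply: eq_bigr => y _; rewrite /qform hform_mxZ.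
- move=> a _ /psdP a_ge0; apply: divr_ge0 (ltW ys_gt0).
  by apply: sumr_ge0 => y _; apply: a_ge0.
- by rewrite divff ?gt_eqF.
Qed.

Lemma vector_state (P : M -> Prop) (x : V) : opsys P -> 0 < qform 1%:M x ->
  state_on P (fun a => qform a x / qform 1%:M x).
Proof.
move=> P_os x_gt0; have := qform_sum_state P (ys := [:: x]); rewrite big_seq1 => /(_ x_gt0).
by move/(state_on_ext P_os); apply=> a _; rewrite big_seq1.
Qed.

Definition restrict (S : pred 'I_n) (x : V) : V := \col_k (if S k then x k 0 else 0).

Variable R : rel 'I_n.

Lemma in_ARP (a : M) : in_AR R a <-> forall i j, ~~ R i j -> a i j = 0.
Proof.
split=> [[b ->] i j Rij | a0]; first by rewrite mxE (negbTE Rij).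
exists a; apply/matrixP => i j; rewrite mxE.
by case: (boolP (R i j)) => // /a0 ->.
Qed.

Lemma in_AR_delta k l : R k l -> in_AR R (delta_mx k l : M).
Proof.
move=> Rkl; apply/in_ARP => i j; rewrite mxE.
by case: eqP => [->|]; case: eqP => [->|] //; rewrite Rkl.
Qed.

Lemma in_AR_outer (x : V) :
  (forall k l, x k 0 != 0 -> x l 0 != 0 -> R k l) -> in_AR R (x *m x^t*).
Proof.
move=> xR; apply/in_ARP => k l; rewrite mxE big_ord1 !mxE.
have [->|xk] := eqVneq (x k 0) 0; first by rewrite mul0r.
have [->|xl] := eqVneq (x l 0) 0; first by rewrite conjC0 mulr0.
by rewrite xR.
Qed.

Lemma qform_restrict_split (v : 'I_n -> C) (S : pred 'I_n) a :
  in_AR R a -> closed (Rv R v) S ->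
  qform a (colv v) = qform a (restrict S (colv v)) + qform a (restrict (predC S) (colv v)).
Proof.
move=> /in_ARP a0 S_closed; rewrite !qform_sum -big_split; apply: eq_bigr => l _.
rewrite -big_split; apply: eq_bigr => k _; rewrite !mxE /=.
case Sk: (S k); case Sl: (S l); rewrite /= ?conjC0 ?mul0r ?mulr0 ?addr0 ?add0r //.
all: have [Rkl|nRkl] := boolP (R k l); last by rewrite a0 // mulr0 mul0r.
all: have [->|vk] := eqVneq (v k) 0; first by rewrite conjC0 !mul0r.
all: have [->|vl] := eqVneq (v l) 0; first by rewrite mulr0.
all: by have := S_closed k l; rewrite /Rv Rkl vk vl => /(_ isT); rewrite -!topredE /= Sk Sl.
Qed.

Hypothesis R_tol : tolerance R.

Lemma connect_sym_Rv (v : 'I_n -> C) : connect_sym (Rv R v).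
Proof. by apply: sym_connect_sym => i k; rewrite /Rv (proj2 R_tol) [(v i != 0) && _]andbC. Qed.

Lemma opsys_AR : opsys (@in_AR K n R).
Proof.
have [R_refl R_sym] := R_tol; split.
- by apply/in_ARP => i j; rewrite mxE; case: eqVneq => [->|]; rewrite ?R_refl.
- by move=> a b /in_ARP a0 /in_ARP b0; apply/in_ARP => i j Rij; rewrite mxE a0 ?b0 ?addr0.
- by move=> c a /in_ARP a0; apply/in_ARP => i j Rij; rewrite mxE a0 ?mulr0.
- by move=> a /in_ARP a0; apply/in_ARP => i j Rij; rewrite !mxE a0 ?conjC0 // R_sym.
Qed.

Lemma unit_vector_state v : unit_vec v -> stateA R (fun a => qform a (colv v)).
Proof.
move=> /unit_vecE v1; have v_gt0 : 0 < qform 1%:M (colv v) by rewrite v1 ltr01.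
by apply: state_on_ext opsys_AR (vector_state opsys_AR v_gt0) _ => a _; rewrite v1 divr1.
Qed.

Lemma tr_Tmap (b a : M) : in_AR R a -> \tr (Tmap R b *m a) = \tr (b *m a).
Proof.
move=> /in_ARP a0; apply: eq_bigr => l _; rewrite !mxE; apply: eq_bigr => k _.
by rewrite mxE; case: (boolP (R l k)) => // Rlk; rewrite a0 ?mul0r ?mulr0 // (proj2 R_tol).
Qed.

Lemma pure_stateA_ext (phi psi : M -> C) : pure_stateA R phi ->
  (forall a, in_AR R a -> phi a = psi a) -> pure_stateA R psi.
Proof.
move=> [phi_state phi_pure] E; split; first exact: state_on_ext opsys_AR phi_state E.
move=> t f1 f2 t01 f1_state f2_state psiE a Aa; rewrite -E //.
by apply: (phi_pure t) => // b Ab; rewrite E // psiE.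
Qed.

End ToleranceAlgebra.
Arguments opsys_AR {K n R}.
Arguments in_AR_delta {K n R k l}.

Section DensityUniqueness.
Variables (K : realType) (n : nat) (R : rel 'I_n) (v : 'I_n -> K[i]) (rho : 'M[K[i]]_n).
Local Notation X := (colv v).
Hypotheses (R_tol : tolerance R) (rho_psd : psd rho).
Hypothesis rho0 : forall a, in_AR R a -> psd a -> qform a X = 0 -> \tr (rho *m a) = 0.

Lemma hform_colv_ecol i : hform 1%:M X (ecol i) = (v i)^*.
Proof. by rewrite hform1_ecolr mxE. Qed.

Lemma density_mul_eq0 x : in_AR R (x *m x^t*) -> hform 1%:M X x = 0 -> rho *m x = 0.
Proof.
move=> Ax Xx; apply: psd_mulmx_eq0 rho_psd _.
rewrite -tr_mul_outer; apply: rho0 Ax (psd_outer x) _.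
by rewrite qform_outer Xx mul0r.
Qed.

Lemma density_col_eq0 i : v i = 0 -> forall l, rho l i = 0.
Proof.
move=> vi0 l; rewrite -hform_ecol hform_ecoll density_mul_eq0 ?mxE //.
  apply: in_AR_outer => k k'; rewrite !mxE !eqxx !andbT.
  case: (eqVneq k i) => [-> _|]; last by rewrite mulr0n eqxx.
  by case: (eqVneq k' i) => [-> _|]; [exact: (proj1 R_tol) | rewrite mulr0n eqxx].
by rewrite hform_colv_ecol vi0 conjC0.
Qed.

Lemma density_col_edge i j : R i j -> forall l, (v j)^* * rho l i = (v i)^* * rho l j.
Proof.
move=> Rij l; pose x := (v j)^* *: ecol i - (v i)^* *: ecol j.
have x_supp k : x k 0 != 0 -> (k == i) || (k == j).
  by rewrite !mxE !eqxx !andbT; case: (k == i); case: (k == j); rewrite ?mulr0 ?subrr ?eqxx.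
have /(congr1 (fun y : 'cV_n => y l 0)) : rho *m x = 0.
  apply: density_mul_eq0; last by rewrite hformBr !hformZr !hform_colv_ecol mulrC subrr.
  have [R_refl R_sym] := R_tol; apply: in_AR_outer => k k' /x_supp + /x_supp.
  by do 2!case/orP=> /eqP ->; rewrite ?R_refl // R_sym.
rewrite -hform_ecoll hformBr !hformZr !hform_ecol mxE.
by move/eqP; rewrite subr_eq0 => /eqP.
Qed.

Lemma density_col_connect m j : v m != 0 -> connect (Rv R v) m j ->
  forall l, (v m)^* * rho l j = (v j)^* * rho l m.
Proof.
move=> vm; pose good k := [forall l, (v m)^* * rho l k == (v k)^* * rho l m].
have good_closed : closed (Rv R v) good.
  apply: intro_closed; first exact: connect_sym_Rv.
  move=> u w /and3P [Ruw vu vw] /forallP good_u.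
  have vu' : (v u)^* != 0 by rewrite conjC_eq0.
  apply/forallP => l; rewrite -(inj_eq (mulfI vu')) mulrCA.
  by rewrite -(density_col_edge Ruw) mulrCA (eqP (good_u l)) mulrCA.
move=> /(closed_connect good_closed) good_mj l.
have /forallP/(_ l)/eqP// : good j.
by rewrite -[good j]/(j \in good) -good_mj; apply/forallP => l'.
Qed.

Lemma density_eq_Pv : unit_vec v -> R_tolerant R v -> \tr rho = 1 -> rho = Pv v.
Proof.
move=> v_unit [[m vm] v_conn] rho_tr.
have rho_herm l j : rho l j = (rho j l)^* by rewrite -{1}(psd_hermitian rho_psd) !mxE.
have rhoE l j : (v m)^* * rho l j = (v j)^* * rho l m.
  have [vj0 | vj] := eqVneq (v j) 0; last exact: density_col_connect (v_conn _ _ vm vj) _.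
  by rewrite (density_col_eq0 vj0) vj0 conjC0 !mul0r mulr0.
have rho_mm : (rho m m)^* = rho m m by rewrite geC0_conj ?psd_diag_ge0.
have rho_col l : v m * rho l m = v l * rho m m.
  by have := congr1 Num.conj (rhoE m l); rewrite !rmorphM /= !conjCK rho_mm -rho_herm.
have rho_prod l j : v m * (v m)^* * rho l j = v l * (v j)^* * rho m m.
  by rewrite -mulrA rhoE mulrCA rho_col mulrCA mulrA.
have vm2 : v m * (v m)^* = rho m m.
  rewrite -[LHS]mulr1 -rho_tr /mxtrace mulr_sumr (eq_bigr _ (fun l _ => rho_prod l l)).
  by rewrite -mulr_suml v_unit mul1r.
have vm2_neq0 : v m * (v m)^* != 0 by rewrite mulf_neq0 ?conjC_eq0.
apply/matrixP => l j; rewrite mxE; apply: (mulfI vm2_neq0).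
by rewrite rho_prod -vm2 mulrC.
Qed.

End DensityUniqueness.

Lemma mul_divfK (F : fieldType) (x y : F) : x != 0 -> x * (y / x) = y.
Proof. by move=> x_neq0; rewrite mulrCA divff ?mulr1. Qed.

Section PureStates.
Variables (K : realType) (n : nat) (R : rel 'I_n).
Local Notation C := K[i].
Local Notation M := 'M[C]_n.
Local Notation V := 'cV[C]_n.
Hypothesis R_tol : tolerance R.

Lemma state_vanishing_eq_vector (v : 'I_n -> C) (psi : M -> C) :
  unit_vec v -> R_tolerant R v -> stateA R psi ->
  (forall a, in_AR R a -> psd a -> qform a (colv v) = 0 -> psi a = 0) ->
  forall a, in_AR R a -> psi a = qform a (colv v).
Proof.
move=> v_unit v_tol psi_state psi0.
have [rho [rho_psd rho_tr rhoE]] := state_density (opsys_AR R_tol) psi_state.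
have rhoPv : rho = Pv v.
  apply: (density_eq_Pv R_tol rho_psd _ v_unit v_tol rho_tr) => a Aa a_psd av0.
  by rewrite -rhoE // psi0.
by move=> a Aa; rewrite rhoE // rhoPv tr_Pv.
Qed.

Lemma vector_state_face (v : 'I_n -> C) (s : C) (g1 g2 : M -> C) :
  unit_vec v -> R_tolerant R v -> 0 < s -> s < 1 -> stateA R g1 -> stateA R g2 ->
  (forall a, in_AR R a -> qform a (colv v) = s * g1 a + (1 - s) * g2 a) ->
  forall a, in_AR R a -> g1 a = qform a (colv v).
Proof.
move=> v_unit v_tol s_gt0 s_lt1 g1_state g2_state gE.
apply: state_vanishing_eq_vector => // a Aa a_psd av0.
case: g2_state (g1_state) => _ _ g2_ge0 _ [_ _ g1_ge0 _].
have g1a_ge0 := mulr_ge0 (ltW s_gt0) (g1_ge0 _ Aa a_psd).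
have s'_gt0 : 0 < 1 - s by rewrite subr_gt0.
have g2a_ge0 := mulr_ge0 (ltW s'_gt0) (g2_ge0 _ Aa a_psd).
have /eqP := gE a Aa; rewrite av0 eq_sym (paddr_eq0 g1a_ge0 g2a_ge0) => /andP [+ _].
by rewrite mulf_eq0 (gt_eqF s_gt0) => /eqP.
Qed.

Lemma vector_state_pure (v : 'I_n -> C) : unit_vec v -> R_tolerant R v ->
  pure_stateA R (fun a => qform a (colv v)).
Proof.
move=> v_unit v_tol; split; first exact: unit_vector_state.
move=> t g1 g2 /andP [t_gt0 t_lt1] g1_state g2_state gE a Aa; split.
  exact: vector_state_face gE a Aa.
have t'_gt0 : 0 < 1 - t by rewrite subr_gt0.
have t'_lt1 : 1 - t < 1 by rewrite ltrBlDr ltrDl.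
apply: (vector_state_face _ _ t'_gt0 t'_lt1 g2_state g1_state) => // b Ab.
by rewrite gE // subKr addrC.
Qed.

Lemma pure_vector_tolerant (v : 'I_n -> C) : unit_vec v ->
  pure_stateA R (fun a => qform a (colv v)) -> R_tolerant R v.
Proof.
move=> /unit_vecE v1 [_ v_pure]; split.
  have [i vi | v0] := pickP (fun i => v i != 0); first by exists i.
  move: v1; rewrite qform1E big1 => [/eqP|k _]; first by rewrite eq_sym oner_eq0.
  by rewrite mxE (eqP (negbFE (v0 k))) normr0 expr0n.
move=> i j vi vj; apply/negPn/negP => ij_disc.
pose S := connect (Rv R v) i.
pose X1 := restrict S (colv v); pose X2 := restrict (predC S) (colv v).
have X_split a : in_AR R a -> qform a (colv v) = qform a X1 + qform a X2.
  by move=> Aa; apply: qform_restrict_split Aa (connect_closed (connect_sym_Rv R_tol v) i).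
have pos (Y : V) k : Y k 0 != 0 -> 0 < qform 1%:M Y.
  by move=> Yk; apply: lt_le_trans (norm_le_qform1 Y k); rewrite exprn_gt0 ?normr_gt0.
have X1_gt0 : 0 < qform 1%:M X1 by apply: (pos _ i); rewrite !mxE /S connect0.
have X2_gt0 : 0 < qform 1%:M X2 by apply: (pos _ j); rewrite !mxE /S /= (negbTE ij_disc).
have [A1 _ _ _] := opsys_AR (K := K) R_tol.
have X_sum : qform 1%:M X1 + qform 1%:M X2 = 1 by rewrite -X_split // v1.
have X12 : 1 - qform 1%:M X1 = qform 1%:M X2 by apply/eqP; rewrite subr_eq addrC X_sum.
have t_lt1 : qform 1%:M X1 < 1 by rewrite -subr_gt0 X12.
have t01 : 0 < qform 1%:M X1 < 1 by rewrite X1_gt0 t_lt1.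
have X_conv a : in_AR R a -> qform a (colv v) =
    qform 1%:M X1 * (qform a X1 / qform 1%:M X1) +
    (1 - qform 1%:M X1) * (qform a X2 / qform 1%:M X2).
  move=> Aa; rewrite X12 (mul_divfK _ (lt0r_neq0 X1_gt0)) (mul_divfK _ (lt0r_neq0 X2_gt0)).
  exact: X_split.
have [+ _] := v_pure _ _ _ t01 (vector_state (opsys_AR R_tol) X1_gt0)
  (vector_state (opsys_AR R_tol) X2_gt0) X_conv _ (in_AR_delta (proj1 R_tol j)).
rewrite !qform_delta !mxE /S (negbTE ij_disc) conjC0 !mul0r => /esym/eqP.
by rewrite mulf_eq0 conjC_eq0 orbb (negbTE vj).
Qed.

Lemma pure_state_qform_sum phi (y : V) (zs : seq V) : pure_stateA R phi -> 0 < qform 1%:M y ->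
  (forall a, in_AR R a -> phi a = qform a y + \sum_(z <- zs) qform a z) ->
  forall a, in_AR R a -> phi a = qform a y / qform 1%:M y.
Proof.
move=> [[_ _ _ phi1] phi_pure] y_gt0 phiE; have AR_os := opsys_AR (K := K) R_tol.
have [A1 _ _ _] := AR_os; set s := \sum_(z <- zs) qform 1%:M z.
have ys1 : qform 1%:M y + s = 1 by rewrite -phiE.
have [s0 | s_neq0] := eqVneq s 0.
  have zs0 z : z \in zs -> z = 0.
    move=> z_zs; apply: qform1_eq0; move/eqP: s0; rewrite psumr_eq0 => [/allP/(_ z z_zs)/eqP //|].
    by move=> *; apply: qform1_ge0.
  move=> a Aa; move: ys1; rewrite s0 addr0 => ->.
  rewrite divr1 phiE // big_seq big1 ?addr0 // => z /zs0 ->; exact: qform0.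
have s_gt0 : 0 < s by rewrite lt0r s_neq0 sumr_ge0 // => z _; apply: qform1_ge0.
have y_lt1 : qform 1%:M y < 1 by rewrite -[X in _ < X]ys1 ltrDl.
have s_eq : 1 - qform 1%:M y = s by rewrite -{1}ys1 addrC addKr.
have ys_conv a : in_AR R a -> phi a =
    qform 1%:M y * (qform a y / qform 1%:M y) +
    (1 - qform 1%:M y) * ((\sum_(z <- zs) qform a z) / s).
  move=> Aa; rewrite s_eq (mul_divfK _ (lt0r_neq0 y_gt0)) (mul_divfK _ s_neq0).
  exact: phiE.
move=> a Aa; have [+ _] := phi_pure _ _ _ (introT andP (conj y_gt0 y_lt1))
  (vector_state AR_os y_gt0) (qform_sum_state _ s_gt0) ys_conv a Aa.
by move=> ->.
Qed.

Lemma pure_state_vector phi : pure_stateA R phi ->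
  exists x : V, qform 1%:M x = 1 /\ forall a, in_AR R a -> phi a = qform a x.
Proof.
move=> phi_pure; have [phi_state _] := phi_pure; have AR_os := opsys_AR (K := K) R_tol.
have [rho [rho_psd _ rhoE]] := state_density AR_os phi_state.
have [ys rho_ys] := psd_sum_outer rho_psd.
have phiE a : in_AR R a -> phi a = \sum_(y <- ys) qform a y.
  move=> Aa; rewrite rhoE // rho_ys mulmx_suml raddf_sum.
  by apply: eq_bigr => y _ /=; rewrite mxtrace_mulC tr_mul_outer.
have /hasP [y y_ys y_neq0] : has (fun y => qform 1%:M y != 0) ys.
  apply/negPn/negP => /hasPn ys0; have [A1 _ _ _] := AR_os; case: phi_state => _ _ _.
  rewrite phiE // big_seq big1 => [/eqP|z /ys0 /negPn /eqP //].
  by rewrite eq_sym oner_eq0.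
have y_gt0 : 0 < qform 1%:M y by rewrite lt0r y_neq0 qform1_ge0.
have phi_y := pure_state_qform_sum (zs := rem y ys) phi_pure y_gt0.
exists ((sqrtC (qform 1%:M y))^-1 *: y).
split=> [|a Aa]; first by rewrite qform_scale_sqrt // divff.
rewrite qform_scale_sqrt // phi_y // => b Ab.
by rewrite phiE // (perm_big _ (perm_to_rem y_ys)) big_cons.
Qed.

Lemma Pv_eq_of_vector_states (v w : 'I_n -> C) : unit_vec v -> R_tolerant R v -> unit_vec w ->
  (forall a, in_AR R a -> qform a (colv v) = qform a (colv w)) -> Pv w = Pv v.
Proof.
move=> v_unit v_tol w_unit vw.
apply: (density_eq_Pv R_tol (psd_Pv w) _ v_unit v_tol (mxtrace_Pv w_unit)).
by move=> a Aa a_psd av0; rewrite tr_Pv -vw.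
Qed.

End PureStates.

Lemma R_tolerant_full (K : realType) (n : nat) (R : rel 'I_n) (v : 'I_n -> K[i]) :
  R_tolerant R v -> R_tolerant (@full_rel n) v.
Proof.
move=> [v_nz v_conn]; split=> // i j vi vj.
apply: connect_sub (v_conn i j vi vj) => k l /and3P [_ vk vl].
by apply: connect1; rewrite /Rv vk vl.
Qed.

Lemma Pv_tolerant_pure_state (K : realType) (n : nat) (R : rel 'I_n) (v : 'I_n -> K[i]) :
  unit_vec v -> R_tolerant R v -> R_tolerant_pure_state R (fun a => \tr (Pv v *m a)).
Proof.
move=> v_unit v_tol; split; last by exists v.
have full_tol : tolerance (@full_rel n) by [].
have := vector_state_pure full_tol v_unit (R_tolerant_full v_tol).
by move/(pure_stateA_ext full_tol); apply=> a _; rewrite tr_Pv.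
Qed.

Theorem proposition4p11 (K : realType) (n : nat) (R : rel 'I_n)
    (HR : tolerance R) :
  (forall v : 'I_n -> K[i], unit_vec v ->
     (pure_stateA R (fun a => \tr (Tmap R (Pv v) *m a)) <-> R_tolerant R v))
  /\ (* F maps R-tolerant pure states of M_n into pure states of A(R) *)
  (forall om : 'M[K[i]]_n -> K[i], R_tolerant_pure_state R om -> pure_stateA R om)
  /\ (* F is injective on R-tolerant pure states *)
  (forall om1 om2 : 'M[K[i]]_n -> K[i],
     R_tolerant_pure_state R om1 -> R_tolerant_pure_state R om2 ->
     (forall a, in_AR R a -> om1 a = om2 a) -> forall a, om1 a = om2 a)
  /\ (* F is onto the pure states of A(R) *)
  (forall phi : 'M[K[i]]_n -> K[i], pure_stateA R phi ->
     exists om, R_tolerant_pure_state R om /\ forall a, in_AR R a -> om a = phi a).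
Proof.
have trTPv v a : in_AR R a -> \tr (Tmap R (Pv v) *m a) = qform a (colv v).
  by move=> Aa; rewrite tr_Tmap // tr_Pv.
split; [|split; [|split]].
- move=> v v_unit; split=> [T_pure | v_tol].
    apply: (pure_vector_tolerant HR v_unit); apply: (pure_stateA_ext HR T_pure) => a Aa.
    by rewrite trTPv.
  by apply: (pure_stateA_ext HR (vector_state_pure HR v_unit v_tol)) => a Aa; rewrite trTPv.
- move=> om [_ [v [v_unit [v_tol omE]]]].
  by apply: (pure_stateA_ext HR (vector_state_pure HR v_unit v_tol)) => a _; rewrite omE tr_Pv.
- move=> om1 om2 [_ [v1 [v1_unit [v1_tol om1E]]]] [_ [v2 [v2_unit [_ om2E]]]] om12 a.
  rewrite om1E om2E (Pv_eq_of_vector_states HR v1_unit v1_tol v2_unit) // => b Ab.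
  by rewrite -!tr_Pv -om1E -om2E om12.
- move=> phi phi_pure; have [x [x1 phiE]] := pure_state_vector HR phi_pure.
  pose v i := x i 0; have xv : colv v = x by apply/matrixP => i j; rewrite ord1 mxE.
  have v_unit : unit_vec v by apply/unit_vecE; rewrite xv.
  have v_tol : R_tolerant R v.
    apply: (pure_vector_tolerant HR v_unit); apply: (pure_stateA_ext HR phi_pure) => a Aa.
    by rewrite xv phiE.
  exists (fun a => \tr (Pv v *m a)); split; first exact: Pv_tolerant_pure_state.
  by move=> a Aa; rewrite tr_Pv xv phiE.
Qed.
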